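(* Let $\mathcal N$ be a phylogenetic network on $X$ that is both tree-sibling and time-consistent. Then $\mathcal N$ is an orchard network.
   Context: Throughout, $X$ is a non-empty finite set and all paths are directed. A phylogenetic network on $X$ is a rooted acyclic directed graph with no parallel arcs such that: (i) the unique root has in-degree $0$ and out-degree $2$; (ii) every vertex of out-degree $0$ has in-degree $1$, and the set of vertices of out-degree $0$ (the leaves) is $X$; (iii) every other vertex has either in-degree $1$ and out-degree $2$ (a tree vertex) or in-degree $2$ and out-degree $1$ (a reticulation). If $|X|=1$, a single vertex (the element of $X$, which is then the root) is also a phylogenetic network. Arcs directed into a reticulation are reticulation arcs; all other arcs are tree arcs. For a $2$-element subset $\{a,b\}\subseteq X$ with parents $p_a,p_b$: $\{a,b\}$ is a cherry if $p_a=p_b$; it is a reticulated cherry with reticulation leaf $b$ if $p_b$ is a reticulation and $(p_a,p_b)$ is an arc. If $\{a,b\}$ is a cherry, reducing $b$ means deleting $b$ and suppressing the resulting vertex of in-degree 1 and out-degree 1 (if the common parent is the root, delete $b$ and the root, leaving the single vertex $a$). If $\{a,b\}$ is a reticulated cherry with reticulation leaf $b$, cutting $\{a,b\}$ means deleting the arc $(p_a,p_b)$ and suppressing the two resulting vertices of in-degree 1 and out-degree 1. These two operations are called cherry reductions. A cherry-reduction sequence of $\mathcal N$ is a sequence $\mathcal N=\mathcal N_0,\mathcal N_1,\dots,\mathcal N_k$ where each $\mathcal N_i$ is obtained from $\mathcal N_{i-1}$ by a single cherry reduction; it is complete if $\mathcal N_k$ is a single vertex. $\mathcal N$ is an orchard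 network if it has a complete cherry-reduction sequence. $\mathcal N$ is tree-sibling if every reticulation has a parent that is also the parent of a tree vertex or a leaf. $\mathcal N$ is time-consistent if there is a map $t$ from the vertex set to the non-negative integers with $t(u)=t(v)$ for every reticulation arc $(u,v)$ and $t(u)<t(v)$ for every tree arc $(u,v)$. *)

From mathcomp Require Import all_boot.
Set Implicit Arguments. Unset Strict Implicit. Unset Printing Implicit Defensive.

(* Arcs as a set means no parallel arcs.
   Leaves keep their identity (as elements of T) under cherry reductions. *)
Record net (T : finType) := Net { verts : {set T}; arcs : {set T * T} }.

Section Net.
Variable T : finType.
Implicit Types (N : net T) (u v w a b p : T).

Definition arc N : rel T := fun u v => (u, v) \in arcs N.
Definition parents N v : {set T} := [set u | arc N u v].
Definition children N v : {set T} := [set w | arc N v w].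
Definition indeg N v := #|parents N v|.
Definition outdeg N v := #|children N v|.

Definition is_tree_vertex N v := indeg N v = 1 /\ outdeg N v = 2.
Definition is_reticulation N v := indeg N v = 2 /\ outdeg N v = 1.
Definition is_leaf N v := v \in verts N /\ outdeg N v = 0.

Definition acyclic N := forall u v, arc N u v -> ~~ connect (arc N) v u.

Definition phylo_network (X : {set T}) N :=
  X != set0 /\
  ( (#|X| = 1 /\ verts N = X /\ arcs N = set0)
  \/ ( (forall u v, arc N u v -> u \in verts N /\ v \in verts N)
     /\ acyclic N
     /\ (exists r, [/\ r \in verts N, indeg N r = 0, outdeg N r = 2 &
           forall v, v \in verts N -> indeg N v = 0 -> v = r]
          /\ (forall v, v \in verts N -> v != r -> outdeg N v != 0 ->
                is_tree_vertex N v \/ is_reticulation N v))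
     /\ (forall v, v \in verts N -> outdeg N v = 0 -> indeg N v = 1)
     /\ [set v in verts N | outdeg N v == 0] = X)).

Definition del_vertex N w : net T :=
  Net [set x in verts N | x != w] [set e in arcs N | (e.1 != w) && (e.2 != w)].

Definition del_arc N u v : net T := Net (verts N) (arcs N :\ (u, v)).

Definition suppress N w : net T :=
  Net [set x in verts N | x != w]
      ([set e in arcs N | (e.1 != w) && (e.2 != w)]
        :|: setX (parents N w) (children N w)).

Definition single_vertex N := #|verts N| = 1 /\ arcs N = set0.

Definition cherry N a b p :=
  [/\ a != b, is_leaf N a, is_leaf N b, arc N p a & arc N p b].

Definition ret_cherry N a b pa pb :=
  [/\ a != b, is_leaf N a, is_leaf N b, arc N pa a & arc N pb b]
  /\ is_reticulation N pb /\ arc N pa pb.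

Definition reduce_cherry N a b p : net T :=
  if indeg N p == 0 then Net [set a] set0
  else suppress (del_vertex N b) p.

Definition cut_ret_cherry N pa pb : net T :=
  suppress (suppress (del_arc N pa pb) pa) pb.

Definition cherry_reduction N N' :=
  (exists a b p, cherry N a b p /\ N' = reduce_cherry N a b p)
  \/ (exists a b pa pb, ret_cherry N a b pa pb /\ N' = cut_ret_cherry N pa pb).

Inductive complete_seq : net T -> Prop :=
  | cs_done N : single_vertex N -> complete_seq N
  | cs_step N N' : cherry_reduction N N' -> complete_seq N' -> complete_seq N.

Definition orchard N := complete_seq N.

Definition tree_sibling N :=
  forall v, v \in verts N -> is_reticulation N v ->
    exists u, arc N u v /\
      exists w, arc N u w /\ (is_tree_vertex N w \/ is_leaf N w).

Definition time_consistent N :=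
  exists t : T -> nat, forall u v, arc N u v ->
    (is_reticulation N v -> t u = t v) /\ (~ is_reticulation N v -> t u < t v).

End Net.

From Pilot Require Import Defs.
From mathcomp Require Import all_boot.
Import Defs.
Set Implicit Arguments. Unset Strict Implicit. Unset Printing Implicit Defensive.

(* The proof removes cherries and reticulated cherries one at a time while
   maintaining an invariant [net_inv]: a non-trivial phylogenetic network that
   is tree-sibling and time-consistent, with acyclicity witnessed by a rank
   strictly increasing along arcs.  Each step works at a lowest internal
   vertex [s] (maximal time, then maximal rank), whose children are leaves:
   - if [s] is a reticulation, tree-sibling gives a parent [u] of [s] with a
     non-reticulation child [w], which must be a leaf by time maximality, so
     {w, b} is a reticulated cherry that we cut;
   - otherwise [s] carries a cherry {a, b}, which we reduce.
   Both operations produce a [reduct] of the network, a notion under which the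
   invariant is preserved (Lemma [reduct_inv]), and strictly decrease the
   number of vertices, except reducing a cherry at the root, which leaves a
   single vertex. *)

Section Operations.
Variable T : finType.
Implicit Types (N : net T) (u v w x y : T).

Lemma in_parents N x v : (x \in parents N v) = arc N x v.
Proof. by rewrite inE. Qed.

Lemma in_children N v y : (y \in children N v) = arc N v y.
Proof. by rewrite inE. Qed.

Lemma verts_suppress N w : verts (suppress N w) = verts N :\ w.
Proof. by apply/setP=> x; rewrite !inE andbC. Qed.

Lemma verts_del_vertex N w : verts (del_vertex N w) = verts N :\ w.
Proof. by apply/setP=> x; rewrite !inE andbC. Qed.

Lemma arc_del_vertex N w x y :
  arc (del_vertex N w) x y = [&& x != w, y != w & arc N x y].
Proof. by rewrite /arc !inE andbC andbA. Qed.

Lemma arc_del_arc N u v x y :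
  arc (del_arc N u v) x y = ((x, y) != (u, v)) && arc N x y.
Proof. by rewrite /arc !inE. Qed.

Lemma arc_suppress N w q c x y :
  parents N w = [set q] -> children N w = [set c] ->
  arc (suppress N w) x y = [&& x != w, y != w & arc N x y] || (x == q) && (y == c).
Proof.
move=> Pw Cw; rewrite /arc /= in_setU in_setX !inE -!/(arc _ _ _).
have -> : arc N x w = (x == q) by rewrite -in_parents Pw inE.
have -> : arc N w y = (y == c) by rewrite -in_children Cw inE.
by rewrite andbC !andbA.
Qed.

End Operations.

Section Degrees.
Variable T : finType.
Implicit Types (N : net T) (u v w x y : T).

Lemma retP N v : reflect (is_reticulation N v) ((indeg N v == 2) && (outdeg N v == 1)).
Proof. by apply: (iffP andP) => [[/eqP ? /eqP ?]|[-> ->]]. Qed.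

Lemma leaf_not_ret N v : outdeg N v = 0 -> ~ is_reticulation N v.
Proof. by move=> ov [_]; rewrite ov. Qed.

Lemma leaf_no_arc N v y : outdeg N v = 0 -> arc N v y = false.
Proof.
move/eqP; rewrite cards_eq0 => /eqP Cv; apply/negbTE.
by apply/negP => vy; have := in_set0 y; rewrite -Cv inE vy.
Qed.

(* The degrees of the vertices that survive a suppression are unchanged,
   provided the suppressed path q -> w -> c does not create a parallel arc. *)
Lemma suppress_degrees N w q c x :
  parents N w = [set q] -> children N w = [set c] -> ~~ arc N q c ->
  q != w -> c != w -> x != w ->
  indeg (suppress N w) x = indeg N x /\ outdeg (suppress N w) x = outdeg N x.
Proof.
move=> Pw Cw nqc qw cw xw; rewrite /indeg /outdeg.
have Eq y : arc N y w = (y == q) by rewrite -in_parents Pw inE.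
have Ec y : arc N w y = (y == c) by rewrite -in_children Cw inE.
split.
- case: (eqVneq x c) => [->|xc].
  + have -> : parents (suppress N w) c = q |: (parents N c :\ w).
      apply/setP=> y; rewrite !inE (arc_suppress _ _ Pw Cw) cw eqxx andbT.
      by case: (eqVneq y q) => [->|]; rewrite ?orbT ?orbF.
    by rewrite cardsU1 !inE negb_and nqc orbT (cardsD1 w (parents N c)) inE Ec eqxx.
  + apply: eq_card => y; rewrite !inE (arc_suppress _ _ Pw Cw) xw (negbTE xc).
    rewrite andbF orbF /=; case: (eqVneq y w) => [->|] //.
    by rewrite Ec (negbTE xc).
- case: (eqVneq x q) => [->|xq].
  + have -> : children (suppress N w) q = c |: (children N q :\ w).
      apply/setP=> y; rewrite !inE (arc_suppress _ _ Pw Cw) qw eqxx /=.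
      by case: (eqVneq y c) => [->|]; rewrite ?orbT ?orbF.
    by rewrite cardsU1 !inE negb_and nqc orbT (cardsD1 w (children N q)) inE Eq eqxx.
  + apply: eq_card => y; rewrite !inE (arc_suppress _ _ Pw Cw) xw (negbTE xq).
    rewrite /= orbF; case: (eqVneq y w) => [->|] //=.
    by rewrite Eq (negbTE xq).
Qed.

Lemma del_leaf_degrees N b p x :
  outdeg N b = 0 -> parents N b = [set p] -> x != b -> x != p ->
  indeg (del_vertex N b) x = indeg N x /\ outdeg (del_vertex N b) x = outdeg N x.
Proof.
move=> ob Pb xb xp; rewrite /indeg /outdeg; split; apply: eq_card => y.
  rewrite !inE arc_del_vertex xb /=.
  by case: (eqVneq y b) => [->|] //; rewrite leaf_no_arc.
rewrite !inE arc_del_vertex xb /=; case: (eqVneq y b) => [->|] //=.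
by rewrite -in_parents Pb inE (negbTE xp).
Qed.

Lemma del_arc_degrees N u v x : x != u -> x != v ->
  indeg (del_arc N u v) x = indeg N x /\ outdeg (del_arc N u v) x = outdeg N x.
Proof.
move=> xu xv; rewrite /indeg /outdeg; split; apply: eq_card => y;
  by rewrite !inE arc_del_arc xpair_eqE ?(negbTE xu) ?(negbTE xv) ?andbF.
Qed.

End Degrees.

(* Acyclicity is replaced by a rank [rk] strictly increasing along
   arcs, which survives reductions unchanged (unlike a fresh acyclicity proof). *)
Record net_inv (T : finType) (N : net T) (r : T) (rk t : T -> nat) : Prop := {
  inv_arc_verts : forall u v, arc N u v -> u \in verts N /\ v \in verts N;
  inv_rank : forall u v, arc N u v -> rk u < rk v;
  inv_root : r \in verts N;
  inv_root_indeg : indeg N r = 0;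
  inv_root_outdeg : outdeg N r = 2;
  inv_root_unique : forall v, v \in verts N -> indeg N v = 0 -> v = r;
  inv_internal : forall v, v \in verts N -> v != r -> outdeg N v != 0 ->
    is_tree_vertex N v \/ is_reticulation N v;
  inv_leaf_indeg : forall v, v \in verts N -> outdeg N v = 0 -> indeg N v = 1;
  inv_tree_sibling : tree_sibling N;
  inv_time : forall u v, arc N u v ->
    (is_reticulation N v -> t u = t v) /\ (~ is_reticulation N v -> t u < t v) }.

Section Invariant.
Variables (T : finType) (N : net T) (r : T) (rk t : T -> nat).
Hypothesis I : net_inv N r rk t.
Implicit Types (u v w x y : T).

Lemma rank_neq u v : rk u < rk v -> u != v.
Proof. by move=> lt; apply: contraTneq lt => ->; rewrite ltnn. Qed.

Lemma arc_neq u v : arc N u v -> u != v.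
Proof. by move=> /(inv_rank I) /rank_neq. Qed.

Lemma time_le u v : arc N u v -> t u <= t v.
Proof.
move=> uv; have [tr tt] := inv_time I uv.
by case: (retP N v) => [/tr -> | /tt /ltnW].
Qed.

Lemma leaf_parentE v p : outdeg N v = 0 -> arc N p v -> forall x, arc N x v = (x == p).
Proof.
move=> ov pv; have vV := (inv_arc_verts I pv).2.
have /eqP /cards1P [q Pv] := inv_leaf_indeg I vV ov.
have : p \in parents N v by rewrite inE.
by rewrite Pv inE => /eqP -> x; rewrite -in_set1 -Pv inE.
Qed.

Lemma connect_rank x y : connect (arc N) x y -> rk x <= rk y.
Proof.
case/connectP => p xp ->{y}; elim: p x xp => [//|z p IH] x /= /andP [xz pz].
exact: ltnW (leq_trans (inv_rank I xz) (IH z pz)).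
Qed.

Lemma connect_from_leaf x y : outdeg N x = 0 -> connect (arc N) x y -> y = x.
Proof. by move=> ox /connectP [[|z p] //= /andP []]; rewrite leaf_no_arc. Qed.

(* Every vertex descends from the root: follow parents, along which the rank
   strictly decreases, until reaching the unique vertex of in-degree 0. *)
Lemma root_reaches x : x \in verts N -> connect (arc N) r x.
Proof.
have [n] := ubnP (rk x); elim: n x => // n IH x /ltnSE xn xV.
case: (eqVneq x r) => [->|xr]; first exact: connect0.
have : 0 < indeg N x by rewrite lt0n; apply: contra_neq xr => /(inv_root_unique I xV).
case/card_gt0P => y; rewrite inE => yx.
apply: connect_trans (connect1 yx).
exact: IH y (leq_trans (inv_rank I yx) xn) (inv_arc_verts I yx).1.
Qed.

Lemma root_child_reaches x : x \in verts N -> x != r ->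
  exists2 c, arc N r c & connect (arc N) c x.
Proof.
move=> /root_reaches /connectP [[|c p] /= rp Ex]; first by rewrite Ex eqxx.
by case/andP: rp => rc cp xr; exists c => //; apply/connectP; exists p.
Qed.

End Invariant.

Section Reduct.
Variable T : finType.
Implicit Types (N : net T) (x y : T).

Record reduct N N' : Prop := {
  reduct_sub : verts N' \subset verts N;
  reduct_deg : {in verts N', forall x,
    indeg N' x = indeg N x /\ outdeg N' x = outdeg N x};
  reduct_arc : forall x y, arc N' x y -> [/\ x \in verts N', y \in verts N' &
    arc N x y \/ exists2 m, arc N x m & arc N m y /\ outdeg N y = 0];
  reduct_keep : {in verts N' &, forall x y, arc N x y -> arc N' x y};
  reduct_removed : forall x y, arc N x y -> x \notin verts N' -> y \in verts N' ->
    outdeg N y = 0;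
  reduct_bypass : forall x y, arc N x y -> x \in verts N' -> y \notin verts N' ->
    exists2 c, arc N' x c & outdeg N c = 0 }.

(* Tree-sibling is the
   only delicate point: the parent of a reticulation survives, and a removed
   tree-vertex sibling is replaced by the leaf reached through the bypass. *)
Lemma reduct_inv N N' r rk t :
  net_inv N r rk t -> reduct N N' -> r \in verts N' -> net_inv N' r rk t.
Proof.
move=> I [sub deg arcs keep removed bypass] rV.
have inV x : x \in verts N' -> x \in verts N by move/(subsetP sub).
have retE x : x \in verts N' -> is_reticulation N' x <-> is_reticulation N x.
  by move=> /deg [Hi Ho]; rewrite /is_reticulation Hi Ho.
split => //.
- by move=> x y /arcs [].
- move=> x y /arcs [_ _ [/(inv_rank I) // | [m xm [my _]]]].
  exact: ltn_trans (inv_rank I xm) (inv_rank I my).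
- by have [-> _] := deg r rV; exact: inv_root_indeg I.
- by have [_ ->] := deg r rV; exact: inv_root_outdeg I.
- by move=> v vV; have [-> _] := deg v vV; apply: (inv_root_unique I); apply: inV.
- move=> v vV vr; have [Hi Ho] := deg v vV; rewrite /is_tree_vertex /is_reticulation Hi Ho.
  by move=> o; apply: (inv_internal I (inV _ vV) vr o).
- by move=> v vV; have [-> ->] := deg v vV; apply: (inv_leaf_indeg I); apply: inV.
- move=> v vV /(retE _ vV) Rv.
  have [u [uv [w [uw Hw]]]] := inv_tree_sibling I (inV _ vV) Rv.
  have uV : u \in verts N'.
    by apply: contraT => uV; case: (leaf_not_ret (removed u v uv uV vV) Rv).
  exists u; split; first exact: keep uv.
  have [wV | wV] := boolP (w \in verts N').
    exists w; split; first exact: keep uw.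
    have [Hi Ho] := deg w wV.
    by case: Hw => [[h1 h2]|[_ h2]]; [left | right]; rewrite /is_tree_vertex /is_leaf ?Hi Ho.
  have [c uc oc] := bypass u w uw uV wV; have [_ cV _] := arcs u c uc.
  by exists c; split => //; right; split => //; have [_ ->] := deg c cV.
- move=> x y /arcs [_ yV [xy | [m xm [my oy]]]].
    have [h1 h2] := inv_time I xy.
    by split => [/(retE _ yV) /h1 // | R]; apply: h2 => /(retE _ yV).
  split => [/(retE _ yV) /(leaf_not_ret oy) // | _].
  exact: leq_ltn_trans (time_le I xm) ((inv_time I my).2 (leaf_not_ret oy)).
Qed.

End Reduct.

Section Cherry.
Variables (T : finType) (N : net T) (r : T) (rk t : T -> nat).
Hypothesis I : net_inv N r rk t.
Variables (a b s q : T).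
Hypotheses (Cs : children N s = [set a; b]) (ab : a != b)
  (oa : outdeg N a = 0) (ob : outdeg N b = 0) (Ps : parents N s = [set q]).

Let N' := suppress (del_vertex N b) s.

Let Esc y : arc N s y = (y == a) || (y == b).
Proof. by rewrite -in_children Cs !inE. Qed.
Let Eqs x : arc N x s = (x == q).
Proof. by rewrite -in_parents Ps inE. Qed.
Let sa : arc N s a. Proof. by rewrite Esc eqxx. Qed.
Let sb : arc N s b. Proof. by rewrite Esc eqxx orbT. Qed.
Let qs : arc N q s. Proof. by rewrite Eqs. Qed.
Let qs' : q != s. Proof. exact: (arc_neq I qs). Qed.
Let qb : q != b. Proof. by apply: contraTneq qs => ->; rewrite leaf_no_arc. Qed.

Lemma cherry_reduced_shape :
  [/\ verts N' = verts N :\ b :\ s,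
      forall x y, arc N' x y =
        [&& x != s, y != s, x != b, y != b & arc N x y] || (x == q) && (y == a)
    & {in verts N', forall x, indeg N' x = indeg N x /\ outdeg N' x = outdeg N x}].
Proof.
have Eb := leaf_parentE I ob sb.
have sb' := arc_neq I sb; have as' : a != s by rewrite eq_sym (arc_neq I sa).
have P1 : parents (del_vertex N b) s = [set q].
  apply/setP=> x; rewrite !inE arc_del_vertex Eqs sb' /=.
  by case: (eqVneq x q) => [->|]; rewrite ?qb ?andbF.
have C1 : children (del_vertex N b) s = [set a].
  apply/setP=> y; rewrite !inE arc_del_vertex Esc sb' /=.
  by case: (eqVneq y a) => [->|]; [rewrite ab | case: (y == b)].
have nqa : ~~ arc (del_vertex N b) q a.
  by rewrite arc_del_vertex (leaf_parentE I oa sa) (negbTE qs') !andbF.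
split.
- by rewrite verts_suppress verts_del_vertex.
- by move=> x y; rewrite (arc_suppress _ _ P1 C1) arc_del_vertex !andbA.
- move=> x; rewrite verts_suppress verts_del_vertex !inE => /and3P [xs xb _].
  have [-> ->] := suppress_degrees P1 C1 nqa qs' as' xs.
  by apply: del_leaf_degrees ob _ xb xs; apply/setP=> y; rewrite !inE Eb.
Qed.

Lemma cherry_reduct : reduct N N'.
Proof.
have [VE EA deg] := cherry_reduced_shape.
have vN' x : x \in verts N' = [&& x != s, x != b & x \in verts N] by rewrite VE !inE.
have aV := (inv_arc_verts I sa).2; have qV := (inv_arc_verts I qs).1.
have aV' : a \in verts N' by rewrite vN' eq_sym (arc_neq I sa) ab.
have qV' : q \in verts N' by rewrite vN' qs' qb.
split => //.
- by rewrite VE; apply: subset_trans (subD1set _ _) (subD1set _ _).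
- move=> x y; rewrite EA => /orP [/and5P [xs ys xb yb xy] | /andP [/eqP -> /eqP ->]].
    by have [xV yV] := inv_arc_verts I xy; rewrite !vN' xs ys xb yb xV yV; split => //; left.
  by split => //; right; exists s.
- by move=> x y; rewrite !vN' => /and3P [xs xb _] /and3P [ys yb _] xy; rewrite EA xs ys xb yb xy.
- move=> x y xy; rewrite vN' (inv_arc_verts I xy).1 andbT negb_and !negbK.
  case/orP => /eqP Ex; last by rewrite Ex leaf_no_arc in xy.
  by move: xy; rewrite Ex Esc => /orP [] /eqP ->.
- move=> x y xy; rewrite vN' => /and3P [xs xb _].
  rewrite vN' (inv_arc_verts I xy).2 andbT negb_and !negbK.
  case/orP => /eqP Ey; move: xy; rewrite Ey.
    by rewrite Eqs => /eqP ->; exists a => //; rewrite EA !eqxx orbT.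
  by rewrite (leaf_parentE I ob sb) (negbTE xs).
Qed.

Lemma cherry_reduction_inv : net_inv N' r rk t /\ #|verts N'| < #|verts N|.
Proof.
have [VE _ _] := cherry_reduced_shape.
have rs : r != s by apply/eqP => Er; have := inv_root_indeg I; rewrite Er /indeg Ps cards1.
have rb : r != b by apply/eqP => Er; have := inv_root_outdeg I; rewrite Er ob.
split; first by apply: reduct_inv I cherry_reduct _; rewrite VE !inE rs rb (inv_root I).
by rewrite VE; apply/proper_card/(sub_proper_trans (subD1set _ _))/properD1/(inv_arc_verts I sb).2.
Qed.

End Cherry.

Section Cut.
Variables (T : finType) (N : net T) (r : T) (rk t : T -> nat).
Hypothesis I : net_inv N r rk t.
Variables (u w s b : T).
Hypotheses (uw : arc N u w) (us : arc N u s) (sb : arc N s b)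
  (Rs : is_reticulation N s) (ow : outdeg N w = 0) (ob : outdeg N b = 0).

Let N' := cut_ret_cherry N u s.

Let ws : w != s. Proof. by apply/eqP => Ew; case: Rs => _; rewrite -Ew ow. Qed.

Lemma cut_children_s : children N s = [set b].
Proof.
have /eqP /cards1P [c Cs] := Rs.2.
have : b \in children N s by rewrite inE.
by rewrite Cs inE => /eqP ->.
Qed.

(* [u] has exactly the children [s] and [w] (it has two, so it is no
   reticulation). *)
Lemma cut_children_u : children N u = [set s; w].
Proof.
have sub : [set s; w] \subset children N u.
  by apply/subsetP=> x; rewrite !inE => /orP [] /eqP ->.
have ou : 2 <= outdeg N u.
  by have := subset_leq_card sub; rewrite cards2 (eq_sym s) ws.
have ou2 : outdeg N u = 2.
  case: (eqVneq u r) => [->|ur]; first exact: inv_root_outdeg I.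
  have uV := (inv_arc_verts I us).1; have ou0 : outdeg N u != 0 by rewrite -lt0n ltnW.
  by case: (inv_internal I uV ur ou0) => [[_ ->] | [_ E]] //; rewrite E in ou.
by apply/eqP; rewrite eq_sym eqEcard sub cards2 (eq_sym s) ws -/(outdeg N u) ou2.
Qed.

Lemma cut_parents_s : exists2 h, h != u & parents N s = [set u; h].
Proof.
have /eqP /cards2P [x [y [xy Ps]]] := Rs.1.
have : u \in parents N s by rewrite inE.
rewrite Ps !inE => /orP [] /eqP ->; first by exists y; rewrite // eq_sym.
by exists x; rewrite // setUC.
Qed.

(* [u] is not the root: otherwise the other parent [h] of [s] would descend
   from [s] (impossible by rank) or from the leaf [w] (impossible). *)
Lemma cut_parent_not_root : u != r.
Proof.
apply/eqP => ur; have [h hu Ps] := cut_parents_s.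
have hs : arc N h s by rewrite -in_parents Ps !inE eqxx orbT.
have hr : h != r by rewrite -ur.
have [c] := root_child_reaches I (inv_arc_verts I hs).1 hr.
rewrite -ur -in_children cut_children_u !inE.
case/orP => /eqP -> => [/(connect_rank I) | /(connect_from_leaf ow) Eh].
  by rewrite leqNgt (inv_rank I hs).
by move: hs; rewrite Eh leaf_no_arc.
Qed.

Lemma cut_parent_u : exists g, parents N u = [set g].
Proof.
apply/cards1P; have uV := (inv_arc_verts I us).1.
have ou2 : outdeg N u = 2 by rewrite /outdeg cut_children_u cards2 (eq_sym s w) ws.
have ou0 : outdeg N u != 0 by rewrite ou2.
case: (inv_internal I uV cut_parent_not_root ou0) => [[iu _] | [_]]; last by rewrite ou2.
by rewrite -/(indeg N u) iu.
Qed.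

Section CutShape.
Variables (g h : T).
Hypotheses (Pu : parents N u = [set g]) (Ps : parents N s = [set u; h]) (hu : h != u).

Let Egu x : arc N x u = (x == g). Proof. by rewrite -in_parents Pu inE. Qed.
Let Eps x : arc N x s = (x == u) || (x == h). Proof. by rewrite -in_parents Ps !inE. Qed.
Let Euc y : arc N u y = (y == s) || (y == w).
Proof. by rewrite -in_children cut_children_u !inE. Qed.
Let Esc y : arc N s y = (y == b). Proof. by rewrite -in_children cut_children_s inE. Qed.
Let Ew x : arc N x w = (x == u). Proof. exact: (leaf_parentE I ow uw x). Qed.
Let Eb x : arc N x b = (x == s). Proof. exact: (leaf_parentE I ob sb x). Qed.
Let gu : arc N g u. Proof. by rewrite Egu. Qed.
Let hs : arc N h s. Proof. by rewrite Eps eqxx orbT. Qed.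
Let us' : u != s. Proof. exact: (arc_neq I us). Qed.
Let gu' : g != u. Proof. exact: (arc_neq I gu). Qed.
Let wu : w != u. Proof. by rewrite eq_sym; exact: (arc_neq I uw). Qed.
Let gs : g != s. Proof. exact: (rank_neq (ltn_trans (inv_rank I gu) (inv_rank I us))). Qed.
Let ub : u != b. Proof. exact: (rank_neq (ltn_trans (inv_rank I us) (inv_rank I sb))). Qed.
Let hs' : h != s. Proof. exact: (arc_neq I hs). Qed.
Let bs : b != s. Proof. by rewrite eq_sym; exact: (arc_neq I sb). Qed.

Let N1 := del_arc N u s.
Let N2 := suppress N1 u.

Let P1 : parents N1 u = [set g].
Proof. by apply/setP=> x; rewrite !inE arc_del_arc xpair_eqE (negbTE us') andbF Egu. Qed.

Let C1 : children N1 u = [set w].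
Proof.
apply/setP=> y; rewrite !inE arc_del_arc xpair_eqE eqxx Euc /=.
by case: (eqVneq y s) => [->|] //=; rewrite eq_sym (negbTE ws).
Qed.

Lemma cut_arc_after_u x y :
  arc N2 x y = [&& x != u, y != u & arc N x y] || (x == g) && (y == w).
Proof.
rewrite (arc_suppress _ _ P1 C1) arc_del_arc xpair_eqE.
by case: (eqVneq x u).
Qed.

Lemma cut_degrees_after_u x : x != u -> x != s ->
  indeg N2 x = indeg N x /\ outdeg N2 x = outdeg N x.
Proof.
move=> xu xs; have n1gw : ~~ arc N1 g w by rewrite arc_del_arc Ew (negbTE gu') andbF.
have [-> ->] := suppress_degrees P1 C1 n1gw gu' wu xu.
exact: del_arc_degrees.
Qed.

Lemma cut_reduced_shape :
  [/\ verts N' = verts N :\ u :\ s,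
      forall x y, arc N' x y = [&& x != s, y != s, x != u, y != u & arc N x y]
        || (x == g) && (y == w) || (x == h) && (y == b)
    & {in verts N', forall x, indeg N' x = indeg N x /\ outdeg N' x = outdeg N x}].
Proof.
have bw : b != w by apply: contraTneq sb => ->; rewrite Ew eq_sym (negbTE us').
have P2 : parents N2 s = [set h].
  apply/setP=> x; rewrite !inE cut_arc_after_u Eps (eq_sym s w) (negbTE ws) andbF orbF.
  by rewrite (eq_sym s u) us' /=; case: (eqVneq x u) => [->|] //=; rewrite eq_sym (negbTE hu).
have C2 : children N2 s = [set b].
  apply/setP=> y; rewrite !inE cut_arc_after_u Esc (eq_sym s g) (negbTE gs) orbF.
  by rewrite (eq_sym s u) us' /=; case: (eqVneq y b) => [->|]; rewrite ?andbT 1?eq_sym ?ub ?andbF.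
have n2hb : ~~ arc N2 h b.
  by rewrite cut_arc_after_u Eb (negbTE hs') (negbTE bw) !andbF.
split.
- by rewrite !verts_suppress.
- move=> x y; rewrite (arc_suppress _ _ P2 C2) cut_arc_after_u.
  case: (eqVneq x g) => [->|_]; case: (eqVneq y w) => [->|_];
    by rewrite ?gs ?ws ?orbT ?andbF ?orbF ?andbA.
- move=> x; rewrite !verts_suppress !inE => /and3P [xs xu _].
  have [-> ->] := suppress_degrees P2 C2 n2hb hs' bs xs.
  exact: cut_degrees_after_u.
Qed.

Lemma cut_reduct : reduct N N'.
Proof.
have [VE EA deg] := cut_reduced_shape.
have vN' x : x \in verts N' = [&& x != s, x != u & x \in verts N] by rewrite VE !inE.
have gV := (inv_arc_verts I gu).1; have wV := (inv_arc_verts I uw).2.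
have hV := (inv_arc_verts I hs).1; have bV := (inv_arc_verts I sb).2.
split => //.
- by rewrite VE; apply: subset_trans (subD1set _ _) (subD1set _ _).
- move=> x y; rewrite EA => /orP [/orP [/and5P [xs ys xu yu xy] | gw] | hb].
  + by have [xV yV] := inv_arc_verts I xy; rewrite !vN' xs ys xu yu xV yV; split => //; left.
  + case/andP: gw => /eqP -> /eqP ->; rewrite !vN' gs gu' ws wu gV wV.
    by split => //; right; exists u.
  + case/andP: hb => /eqP -> /eqP ->; rewrite !vN' hs' hu bs eq_sym ub hV bV.
    by split => //; right; exists s.
- by move=> x y; rewrite !vN' => /and3P [xs xu _] /and3P [ys yu _] xy; rewrite EA xs ys xu yu xy.
- move=> x y xy; rewrite vN' (inv_arc_verts I xy).1 andbT negb_and !negbK vN'.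
  case/orP => /eqP Ex; move: xy; rewrite Ex; first by rewrite Esc => /eqP ->.
  by rewrite Euc => /orP [] /eqP ->; rewrite ?eqxx.
- move=> x y xy; rewrite vN' => /and3P [xs xu _].
  rewrite vN' (inv_arc_verts I xy).2 andbT negb_and !negbK.
  case/orP => /eqP Ey; move: xy; rewrite Ey.
    by rewrite Eps (negbTE xu) => /eqP ->; exists b => //; rewrite EA !eqxx !orbT.
  by rewrite Egu => /eqP ->; exists w => //; rewrite EA !eqxx orbT.
Qed.

End CutShape.

Lemma cut_reduction_inv : net_inv N' r rk t /\ #|verts N'| < #|verts N|.
Proof.
have [g Pu] := cut_parent_u; have [h hu Ps] := cut_parents_s.
have [VE _ _] := cut_reduced_shape Pu Ps hu.
have rs : r != s by apply/eqP => Er; have := inv_root_indeg I; rewrite Er Rs.1.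
have ru : r != u by rewrite eq_sym cut_parent_not_root.
split; first by apply: reduct_inv I (cut_reduct Pu Ps hu) _; rewrite VE !inE rs ru (inv_root I).
by rewrite VE; apply/proper_card/(sub_proper_trans (subD1set _ _))/properD1/(inv_arc_verts I us).1.
Qed.

End Cut.

Section Step.
Variables (T : finType) (N : net T) (r : T) (rk t : T -> nat).
Hypothesis I : net_inv N r rk t.

Definition lowest_internal s := [/\ s \in verts N, outdeg N s != 0,
  forall x, x \in verts N -> outdeg N x != 0 -> t x <= t s
  & forall c, arc N s c -> outdeg N c = 0].

(* Take a non-leaf of maximal time and, among those, of maximal rank: a
   non-leaf child would have larger time (tree arc) or equal time and larger
   rank (reticulation arc). *)
Lemma exists_lowest_internal : exists s, lowest_internal s.
Proof.
pose S0 := [set v in verts N | outdeg N v != 0].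
have rS0 : r \in S0 by rewrite inE (inv_root I) (inv_root_outdeg I).
have [s1 s1S0 s1max] := @arg_maxnP _ r (fun v => v \in S0) t rS0.
pose S := [set v in S0 | t v == t s1].
have s1S : s1 \in S by rewrite inE s1S0 eqxx.
have [s sS smax] := @arg_maxnP _ s1 (fun v => v \in S) rk s1S.
move: (sS); rewrite !inE => /andP [/andP [sV os0] /eqP ts].
exists s; split => // [x xV ox | c sc].
  by rewrite ts; apply: s1max; rewrite inE xV.
apply/eqP; apply: contraT => oc.
have cS0 : c \in S0 by rewrite inE (inv_arc_verts I sc).2 oc.
have [tR tT] := inv_time I sc.
case: (retP N c) => [Rc | nRc].
  have cS : c \in S by rewrite inE cS0 -(tR Rc) ts eqxx.
  by have := leq_trans (inv_rank I sc) (smax c cS); rewrite ltnn.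
by have := leq_trans (tT nRc) (s1max c cS0); rewrite -ts ltnn.
Qed.

Definition reduces_well N' :=
  cherry_reduction N N' /\
  (single_vertex N' \/ net_inv N' r rk t /\ #|verts N'| < #|verts N|).

(* At a lowest reticulation [s], a tree-sibling witness is a leaf, by time
   maximality, so [s] lies in a reticulated cherry that can be cut. *)
Lemma lowest_reticulation_step s :
  lowest_internal s -> is_reticulation N s -> exists N', reduces_well N'.
Proof.
move=> [sV _ tmax leafc] Rs.
have /eqP /cards1P [b Cs] := Rs.2.
have sb : arc N s b by rewrite -in_children Cs inE.
have ob := leafc b sb.
have [u [us [w [uw Hw]]]] := inv_tree_sibling I sV Rs.
have nRw : ~ is_reticulation N w.
  by case: Hw => [[h1 _]|[_ h2]] [h3 h4]; [rewrite h1 in h3 | rewrite h2 in h4].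
have ow : outdeg N w = 0.
  apply/eqP; apply: contraT => ow; have wV := (inv_arc_verts I uw).2.
  have := leq_trans ((inv_time I uw).2 nRw) (tmax w wV ow).
  by rewrite -((inv_time I us).1 Rs) ltnn.
have wb : w != b.
  apply: contraTneq uw => ->; rewrite (leaf_parentE I ob sb).
  exact: (arc_neq I us).
exists (cut_ret_cherry N u s); split.
  2: by right; exact: (cut_reduction_inv I uw us sb Rs ow ob).
right; exists w, b, u, s; split=> //; split=> //.
by split => //; split => //; [exact: (inv_arc_verts I uw).2 | exact: (inv_arc_verts I sb).2].
Qed.

(* A lowest vertex that is not a reticulation has two leaf children: reduce
   the cherry they form (if it hangs from the root, one vertex remains). *)
Lemma lowest_tree_step s :
  lowest_internal s -> ~ is_reticulation N s -> exists N', reduces_well N'.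
Proof.
move=> [sV os0 _ leafc] nRs.
have os2 : outdeg N s = 2.
  case: (eqVneq s r) => [->|sr]; first exact: inv_root_outdeg I.
  by case: (inv_internal I sV sr os0) => [[_ ->]|].
have [a [b [ab Cs]]] : exists a b, a != b /\ children N s = [set a; b] by apply/cards2P/eqP.
have sa : arc N s a by rewrite -in_children Cs !inE eqxx.
have sb : arc N s b by rewrite -in_children Cs !inE eqxx orbT.
have oa := leafc a sa; have ob := leafc b sb.
exists (reduce_cherry N a b s); split.
  left; exists a, b, s; split => //.
  by split => //; split => //; [exact: (inv_arc_verts I sa).2 | exact: (inv_arc_verts I sb).2].
rewrite /reduce_cherry; case: ifP => [_|is0]; first by left; split; rewrite ?cards1.
have sr : s != r by apply: contraFneq is0 => ->; rewrite (inv_root_indeg I).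
have : indeg N s == 1 by case: (inv_internal I sV sr os0) => [[->]|].
by case/cards1P => q Ps; right; exact: (cherry_reduction_inv I Cs ab oa ob Ps).
Qed.

Lemma reduction_step : exists N', reduces_well N'.
Proof.
have [s low] := exists_lowest_internal.
by case: (retP N s) => [/(lowest_reticulation_step low) | /(lowest_tree_step low)].
Qed.

End Step.

Lemma net_inv_orchard (T : finType) (N : net T) r rk t : net_inv N r rk t -> orchard N.
Proof.
have [n] := ubnP #|verts N|; elim: n N => // n IH N /ltnSE size_le I.
have [N' [reduce [single | [I' size_lt]]]] := reduction_step I;
  rewrite /orchard; apply: (cs_step reduce); first exact: cs_done.
exact: IH N' (leq_trans size_lt size_le) I'.
Qed.

(* In an acyclic graph the number of ancestors strictly increases along arcs. *)
Definition ancestor_count (T : finType) (N : net T) (x : T) :=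
  #|[set y | connect (arc N) y x]|.

Lemma ancestor_count_lt (T : finType) (N : net T) u v :
  acyclic N -> arc N u v -> ancestor_count N u < ancestor_count N v.
Proof.
move=> acyc uv; apply: proper_card; apply/properP; split.
  by apply/subsetP=> y; rewrite !inE => yu; apply: connect_trans yu (connect1 uv).
by exists v; rewrite inE ?connect0 //; exact: acyc uv.
Qed.

Theorem lemma2p1 (T : finType) (X : {set T}) (N : net T) :
  phylo_network X N -> tree_sibling N -> time_consistent N -> orchard N.
Proof.
move=> [_ [[X1 [vX aE]] | [arcsV [acyc [[r [[rV r0 r2 runiq] internal]] [leafc _]]]]]] ts [t tc].
  by rewrite /orchard; apply: cs_done; split; rewrite ?vX.
apply: (@net_inv_orchard _ _ r (ancestor_count N) t).
by split => // u v; exact: ancestor_count_lt.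
Qed.
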